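(* For every integer $n\ge 4$ there exist a boolean classifier $\kappa:\{0,1\}^n\to\{0,1\}$ and a point $\mathbf v\in\{0,1\}^n$ such that, for the sample $(\mathbf v,\kappa(\mathbf v))$, there exist an irrelevant feature $i_1\in\mathcal F$ and a relevant feature $i_2\in\mathcal F\setminus\{i_1\}$ with $\mathrm{Sv}(i_1)\cdot\mathrm{Sv}(i_2)>0$ (issue I6).
   Context: Let $\mathcal F=\{1,\dots,n\}$. A boolean classifier is a non-constant function $\kappa:\{0,1\}^n\to\{0,1\}$; a sample is a pair $(\mathbf v,c)$ with $\mathbf v\in\{0,1\}^n$ and $c=\kappa(\mathbf v)$. For $\mathcal S\subseteq\mathcal F$ let $\Upsilon(\mathcal S;\mathbf v)=\{\mathbf x\in\{0,1\}^n : x_j=v_j \text{ for all } j\in\mathcal S\}$ and, for any function $g$ on $\{0,1\}^n$, $\mathbf E[g\mid \mathbf x_{\mathcal S}=\mathbf v_{\mathcal S}]=|\Upsilon(\mathcal S;\mathbf v)|^{-1}\sum_{\mathbf x\in\Upsilon(\mathcal S;\mathbf v)}g(\mathbf x)$ (uniform distribution, independent features). The characteristic function is $\upsilon(\mathcal S)=\mathbf E[\kappa\mid\mathbf x_{\mathcal S}=\mathbf v_{\mathcal S}]$, and the SHAP score of feature $i$ is $\mathrm{Sv}(i)=\sum_{\mathcal S\subseteq\mathcal F\setminus\{i\}}\frac{|\mathcal S|!\,(n-|\mathcal S|-1)!}{n!}\big(\upsilon(\mathcal S\cup\{i\})-\upsilon(\mathcal S)\big)$. The similarity predicate is $\sigma(\mathbf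 x)=1$ if $\kappa(\mathbf x)=\kappa(\mathbf v)$ and $0$ otherwise. A set $\mathcal S\subseteq\mathcal F$ is a weak abductive explanation (WAXp) if $\mathbf E[\sigma\mid\mathbf x_{\mathcal S}=\mathbf v_{\mathcal S}]=1$ (i.e. $\kappa(\mathbf x)=\kappa(\mathbf v)$ for all $\mathbf x\in\Upsilon(\mathcal S;\mathbf v)$); an abductive explanation (AXp) is a WAXp $\mathcal S$ such that $\mathcal S\setminus\{t\}$ is not a WAXp for every $t\in\mathcal S$. A feature is relevant if it belongs to at least one AXp, and irrelevant otherwise. *)

(* Features F = 'I_n (0-indexed), points {0,1}^n = {ffun 'I_n -> bool},
   exact arithmetic in rat. *)
From mathcomp Require Import all_boot all_order all_algebra.
Set Implicit Arguments. Unset Strict Implicit. Unset Printing Implicit Defensive.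
Import Order.TTheory GRing.Theory Num.Theory.
Local Open Scope ring_scope.

Definition point (n : nat) := {ffun 'I_n -> bool}.

Definition nonconstant (n : nat) (kappa : point n -> bool) : Prop :=
  exists x y : point n, kappa x != kappa y.

Definition Upsilon (n : nat) (S : {set 'I_n}) (v : point n) : {set point n} :=
  [set x : point n | [forall j in S, x j == v j]].

(* E[g | x_S = v_S] under the uniform distribution *)
Definition condE (n : nat) (g : point n -> rat) (S : {set 'I_n}) (v : point n) : rat :=
  (\sum_(x in Upsilon S v) g x) / (#|Upsilon S v|)%:R.

Definition charfun (n : nat) (kappa : point n -> bool) (v : point n)
  (S : {set 'I_n}) : rat :=
  condE (fun x => (kappa x)%:R) S v.

Definition Sv (n : nat) (kappa : point n -> bool) (v : point n) (i : 'I_n) : rat :=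
  \sum_(S : {set 'I_n} | i \notin S)
     ((#|S|)`! * (n - #|S| - 1)`!)%:R / (n`!)%:R *
     (charfun kappa v (S :|: [set i]) - charfun kappa v S).

Definition sigma (n : nat) (kappa : point n -> bool) (v : point n) (x : point n) : rat :=
  (kappa x == kappa v)%:R.

Definition WAXp (n : nat) (kappa : point n -> bool) (v : point n) (S : {set 'I_n}) : Prop :=
  condE (sigma kappa v) S v = 1.

Definition AXp (n : nat) (kappa : point n -> bool) (v : point n) (S : {set 'I_n}) : Prop :=
  WAXp kappa v S /\ (forall t, t \in S -> ~ WAXp kappa v (S :\ t)).

Definition relevant (n : nat) (kappa : point n -> bool) (v : point n) (i : 'I_n) : Prop :=
  exists S : {set 'I_n}, AXp kappa v S /\ i \in S.

Definition irrelevant (n : nat) (kappa : point n -> bool) (v : point n) (i : 'I_n) : Prop :=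
  ~ relevant kappa v i.

(* Take kappa(x) = ~x_a /\ ~x_b /\ (~x_c \/ x_d) and v = 1.  Since kappa v = 0 and
   kappa vanishes as soon as x_a = 1 or x_b = 1, the WAXps are exactly the sets
   meeting {a, b}; so the AXps are {a} and {b}, and c is irrelevant while a is
   relevant.  Flipping x_a or x_c from 1 to 0 can never turn kappa from 1 to 0, so
   every marginal contribution of a and of c to the SHAP score is <= 0, and the one
   for the empty coalition is < 0.  Hence Sv(a) < 0 and Sv(c) < 0. *)
From mathcomp Require Import all_boot all_order all_algebra.
From mathcomp Require Import ring.
Import Order.TTheory GRing.Theory Num.Theory.
Set Implicit Arguments. Unset Strict Implicit. Unset Printing Implicit Defensive.
Local Open Scope ring_scope.

Definition flip (n : nat) (i : 'I_n) (x : point n) : point n :=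
  [ffun j => if j == i then ~~ x j else x j].

Lemma flipK n (i : 'I_n) : involutive (flip i).
Proof.
by move=> x; apply/ffunP => j; rewrite !ffunE; case: eqP => // _; rewrite negbK.
Qed.

Lemma flip_inj n (i : 'I_n) : injective (flip i).
Proof. exact: inv_inj (flipK i). Qed.

Lemma flip_indicator n (i : 'I_n) : flip i [ffun j => j == i] = [ffun => false].
Proof. by apply/ffunP => j; rewrite !ffunE; case: eqP. Qed.

Section Upsilon.
Variables (n : nat) (v : point n).

Lemma Upsilon_self (S : {set 'I_n}) : v \in Upsilon S v.
Proof. by rewrite inE; apply/forallP => j; apply/implyP. Qed.

Lemma card_Upsilon_gt0 (S : {set 'I_n}) : (0 < #|Upsilon S v|)%N.
Proof. by apply/card_gt0P; exists v; apply: Upsilon_self. Qed.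

Lemma Upsilon_setU1 (S : {set 'I_n}) i x :
  (x \in Upsilon (S :|: [set i]) v) = (x \in Upsilon S v) && (x i == v i).
Proof.
rewrite !inE; apply/forallP/andP => [H|[/forallP H1 /eqP H2] j].
  split; last by apply: (implyP (H i)); rewrite !inE eqxx orbT.
  by apply/forallP => j; apply/implyP => jS; apply: (implyP (H j)); rewrite inE jS.
apply/implyP; rewrite !inE => /orP [jS|/eqP ->]; last by rewrite H2.
exact: (implyP (H1 j)).
Qed.

Lemma Upsilon_flip (S : {set 'I_n}) i x :
  i \notin S -> (flip i x \in Upsilon S v) = (x \in Upsilon S v).
Proof.
move=> iS; rewrite !inE; apply: eq_forallb => j; rewrite ffunE.
by case: (eqVneq j i) => [->|//]; rewrite (negbTE iS).
Qed.

Lemma sum_Upsilon_flip (S : {set 'I_n}) i (f : point n -> rat) : i \notin S ->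
  \sum_(x in Upsilon S v) f x =
  \sum_(x in Upsilon (S :|: [set i]) v) f x +
  \sum_(x in Upsilon (S :|: [set i]) v) f (flip i x).
Proof.
move=> iS; rewrite (bigID (fun x : point n => x i == v i)) /=; congr (_ + _).
  by apply: eq_bigl => x; rewrite Upsilon_setU1.
rewrite (reindex_inj (@flip_inj n i)) /=; apply: eq_bigl => x.
by rewrite Upsilon_setU1 Upsilon_flip // ffunE eqxx; case: (x i); case: (v i).
Qed.

Variable kappa : point n -> bool.

Lemma charfun_setU1_sub (S : {set 'I_n}) i : i \notin S ->
  charfun kappa v (S :|: [set i]) - charfun kappa v S =
  (\sum_(x in Upsilon (S :|: [set i]) v) ((kappa x)%:R - (kappa (flip i x))%:R))
  / (2 * (#|Upsilon (S :|: [set i]) v|)%:R).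
Proof.
move=> iS; rewrite /charfun /condE sumrB (sum_Upsilon_flip _ iS).
have card_split : (#|Upsilon S v|)%:R = 2 * (#|Upsilon (S :|: [set i]) v|)%:R :> rat.
  have := sum_Upsilon_flip (fun=> (1 : rat)) iS; rewrite !sumr_const => ->.
  by rewrite -mulr2n mulr_natl.
have : (#|Upsilon (S :|: [set i]) v|)%:R != 0 :> rat.
  by rewrite pnatr_eq0 -lt0n card_Upsilon_gt0.
rewrite card_split; move: (#|Upsilon (S :|: [set i]) v|)%:R => c c0.
by field; exact: c0.
Qed.

Section MonotoneFeature.
Variable i : 'I_n.
Hypothesis flip_le : forall x : point n, x i = v i -> (kappa x <= kappa (flip i x))%N.

Lemma charfun_setU1_sub_le0 (S : {set 'I_n}) : i \notin S ->
  charfun kappa v (S :|: [set i]) - charfun kappa v S <= 0.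
Proof.
move=> iS; rewrite charfun_setU1_sub // pmulr_lle0; last first.
  by rewrite invr_gt0 mulr_gt0 // ltr0n card_Upsilon_gt0.
apply: sumr_le0 => x; rewrite Upsilon_setU1 => /andP[_ /eqP xi].
by rewrite subr_le0 ler_nat flip_le.
Qed.

Lemma charfun_setU1_sub_lt0 (S : {set 'I_n}) w : i \notin S ->
  w \in Upsilon (S :|: [set i]) v -> kappa w = false -> kappa (flip i w) = true ->
  charfun kappa v (S :|: [set i]) - charfun kappa v S < 0.
Proof.
move=> iS wU kw kfw; rewrite charfun_setU1_sub // pmulr_llt0; last first.
  by rewrite invr_gt0 mulr_gt0 // ltr0n card_Upsilon_gt0.
rewrite (bigD1 w wU) kw kfw -[X in _ < X]addr0 ltr_leD ?subr_lt0 ?ltr01 //.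
apply: sumr_le0 => x /andP[xU _].
have /andP[_ /eqP xi] : (x \in Upsilon S v) && (x i == v i) by rewrite -Upsilon_setU1.
by rewrite subr_le0 ler_nat flip_le.
Qed.

Lemma Sv_lt0 (w : point n) : w i = v i -> kappa w = false -> kappa (flip i w) = true ->
  Sv kappa v i < 0.
Proof.
move=> wi kw kfw.
have weight_gt0 (S : {set 'I_n}) :
    0 < ((#|S|)`! * (n - #|S| - 1)`!)%:R / (n`!)%:R :> rat.
  by rewrite divr_gt0 // ltr0n ?muln_gt0 ?fact_gt0.
have wU : w \in Upsilon (set0 :|: [set i]) v.
  by rewrite Upsilon_setU1 wi eqxx andbT inE; apply/forallP => j; rewrite inE.
rewrite /Sv (bigD1 set0) ?inE //= -[X in _ < X]addr0 ltr_leD //.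
  by rewrite pmulr_rlt0 // (charfun_setU1_sub_lt0 _ wU) ?inE.
apply: sumr_le0 => S /andP[iS _].
by rewrite pmulr_rle0 // charfun_setU1_sub_le0.
Qed.

End MonotoneFeature.

Lemma WAXpP (S : {set 'I_n}) :
  WAXp kappa v S <-> {in Upsilon S v, forall x, kappa x = kappa v}.
Proof.
rewrite /WAXp /condE /sigma.
have N0 : (#|Upsilon S v|)%:R != 0 :> rat.
  by rewrite pnatr_eq0 -lt0n card_Upsilon_gt0.
split=> [H x xU|H]; last first.
  by rewrite (eq_bigr (fun=> 1)) ?sumr_const ?divff // => x /H ->; rewrite eqxx.
have defect0 : \sum_(y in Upsilon S v) (1 - (kappa y == kappa v)%:R) = 0 :> rat.
  by rewrite sumrB sumr_const -[X in _ - X](divfK N0) H mul1r subrr.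
have defect_ge0 y : y \in Upsilon S v -> 0 <= 1 - (kappa y == kappa v)%:R :> rat.
  by case: eqP; rewrite ?subrr ?subr0.
have := psumr_eq0P defect_ge0 defect0 xU.
by case: eqP => // _ /eqP; rewrite subr0 oner_eq0.
Qed.

End Upsilon.

Section I6.
Variables (n : nat) (a b c d : 'I_n).
Hypotheses (ca : c != a) (cb : c != b) (cd : c != d) (da : d != a) (db : d != b).

Definition kappa_I6 (x : point n) : bool := ~~ x a && ~~ x b && (~~ x c || x d).

Definition ones : point n := [ffun => true].

Lemma kappa_I6_ones : kappa_I6 ones = false.
Proof. by rewrite /kappa_I6 ffunE. Qed.

Lemma WAXp_kappa_I6 (S : {set 'I_n}) : WAXp kappa_I6 ones S <-> a \in S \/ b \in S.
Proof.
rewrite WAXpP kappa_I6_ones; split=> [H|H x]; last first.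
  rewrite inE => /forallP xU; rewrite /kappa_I6.
  by case: H => [/(implyP (xU a))|/(implyP (xU b))]; rewrite ffunE => /eqP ->;
    rewrite ?andbF.
apply/orP; apply/negPn/negP; rewrite negb_or => /andP[aS bS].
pose x : point n := [ffun j => (j != a) && (j != b)].
suff /H : x \in Upsilon S ones by rewrite /kappa_I6 !ffunE !eqxx !andbF da db orbT.
rewrite inE; apply/forallP => j; apply/implyP => jS; rewrite !ffunE eqb_id.
by apply/andP; split; [apply: contraNneq aS | apply: contraNneq bS] => <-.
Qed.

Lemma irrelevant_kappa_I6_c : irrelevant kappa_I6 ones c.
Proof.
move=> [S [[/WAXp_kappa_I6 SW Smin] cS]]; apply: (Smin c cS); apply/WAXp_kappa_I6.
by rewrite !inE; case: SW => ->; rewrite andbT; [left|right]; rewrite eq_sym.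
Qed.

Lemma relevant_kappa_I6_a : relevant kappa_I6 ones a.
Proof.
exists [set a]; rewrite set11; split=> //; split=> [|t /set1P ->].
  by apply/WAXp_kappa_I6; left; rewrite set11.
by rewrite setDv => /WAXp_kappa_I6[]; rewrite inE.
Qed.

Lemma Sv_kappa_I6_a_lt0 : Sv kappa_I6 ones a < 0.
Proof.
apply: (@Sv_lt0 _ _ _ _ _ [ffun j => j == a]);
  rewrite ?flip_indicator /kappa_I6 ?ffunE ?eqxx //.
by move=> x; rewrite ffunE => ->.
Qed.

Lemma Sv_kappa_I6_c_lt0 : Sv kappa_I6 ones c < 0.
Proof.
have [ac bc dc] : [/\ a != c, b != c & d != c] by rewrite !(eq_sym _ c).
apply: (@Sv_lt0 _ _ _ _ _ [ffun j => j == c]);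
  rewrite ?flip_indicator /kappa_I6 !ffunE ?eqxx //.
- move=> x; rewrite !ffunE (negbTE ac) (negbTE bc) (negbTE dc) eqxx => ->.
  by case: (x a); case: (x b); case: (x d).
- by rewrite (negbTE ac) (negbTE bc) (negbTE dc).
Qed.

End I6.

Theorem proposition5 (n : nat) (hn : (4 <= n)%N) :
  exists (kappa : point n -> bool) (v : point n),
    nonconstant kappa /\
    exists i1 i2 : 'I_n,
      irrelevant kappa v i1 /\ relevant kappa v i2 /\ i2 != i1 /\
      0 < Sv kappa v i1 * Sv kappa v i2.
Proof.
pose ord k (lt_k4 : (k < 4)%N) : 'I_n := Ordinal (leq_trans lt_k4 hn).
pose a := ord 0 isT; pose b := ord 1 isT; pose c := ord 2 isT; pose d := ord 3 isT.
exists (kappa_I6 a b c d); exists (ones n); split.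
  by exists (ones n), [ffun => false]; rewrite kappa_I6_ones /kappa_I6 !ffunE.
exists c, a; split; first by apply: irrelevant_kappa_I6_c.
split; first exact: relevant_kappa_I6_a.
split=> //; rewrite nmulr_rgt0 ?Sv_kappa_I6_a_lt0 //.
by apply: Sv_kappa_I6_c_lt0.
Qed.
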